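(* Let $0\le\beta<1$ and $\Delta>1$ be constants and let $q\ge3(1-\beta)\Delta+2$. Define $f_q:\mathbb{R}_{\ge0}\to\mathbb{R}_{\ge0}$ by $f_q(x)=\frac{2(1-\beta)}{q-1-(1-\beta)x}$ if $x\le\frac{q-1}{1-\beta}-2$ and $f_q(x)=1$ otherwise. Let $X\sim\mathrm{Bin}(n,\Delta/n)$. Then for all sufficiently large $n$, $\mathbb{E}[f_q(X)]<\frac{1}{\Delta}$. *)

From Stdlib Require Import Reals Lra Lia.
Open Scope R_scope.

Definition f_q (beta q x : R) : R :=
  if Rle_dec x ((q - 1) / (1 - beta) - 2)
  then 2 * (1 - beta) / (q - 1 - (1 - beta) * x)
  else 1.

Definition binom_pmf (n : nat) (p : R) (k : nat) : R :=
  C n k * p ^ k * (1 - p) ^ (n - k).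

Definition binom_expect (n : nat) (p : R) (g : R -> R) : R :=
  sum_f_R0 (fun k => binom_pmf n p k * g (INR k)) n.

From Stdlib Require Import Reals Factorial Lra Lia ZArith.
Open Scope R_scope.

(* Put a = (q-1)/(1-beta) >= 3 Delta + 1, so that f_q(x) = 2/(a-x) for x <= a-2 and 1
   otherwise. On the naturals f_q is dominated by a polynomial in the falling factorials
   (x)_j, a truncation of the Newton series 2/(a-x) = sum_j 2 (x)_j / (a)_(j+1). The
   factorial moments of X ~ Bin(n, Delta/n) are E[(X)_j] = (n)_j (Delta/n)^j <= Delta^j,
   so E[f_q(X)] is bounded by the same truncated series evaluated at Delta^j, uniformly in
   n > Delta (needed only for Delta/n to be a probability). It remains to pick the truncation order J: J = 3 and J = 6 reduce Delta <= 12 to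
   one-variable polynomial inequalities, and for Delta > 12 the order J = floor(Delta)
   works, because the terms t_j = 2 Delta^j / (a)_(j+1) obey
   (a - j - 1) t_(j+1) = Delta t_j and decay at least geometrically with ratio 1/2. *)

Fixpoint falling (x : R) (j : nat) : R :=
  match j with
  | O => 1
  | S j' => falling x j' * (x - INR j')
  end.

Lemma falling_S_l (x : R) (j : nat) : falling x (S j) = x * falling (x - 1) j.
Proof.
  induction j as [|j IH]; [simpl; ring|].
  change (falling x (S (S j))) with (falling x (S j) * (x - INR (S j))).
  rewrite IH, S_INR; simpl; ring.
Qed.

Lemma falling_INR_S (k j : nat) :
  falling (INR (S k)) (S j) = INR (S k) * falling (INR k) j.
Proof. rewrite falling_S_l, S_INR; do 2 f_equal; ring. Qed.

Lemma falling_0_S (j : nat) : falling 0 (S j) = 0.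
Proof. rewrite falling_S_l; ring. Qed.

Lemma falling_INR_ge0 (k j : nat) : 0 <= falling (INR k) j.
Proof.
  revert j; induction k as [|k IH]; intros [|j]; try (simpl; lra).
  - change (INR 0) with 0; rewrite falling_0_S; lra.
  - rewrite falling_INR_S; apply Rmult_le_pos; [apply pos_INR | apply IH].
Qed.

Lemma falling_INR_le_pow (k j : nat) : falling (INR k) j <= INR k ^ j.
Proof.
  revert j; induction k as [|k IH]; intros [|j]; try (simpl; lra).
  - change (INR 0) with 0; rewrite falling_0_S, pow_i by lia; lra.
  - rewrite falling_INR_S; change (INR (S k) ^ S j) with (INR (S k) * INR (S k) ^ j).
    apply Rmult_le_compat_l; [apply pos_INR|].
    apply (Rle_trans _ _ _ (IH j)), pow_incr.
    split; [apply pos_INR | apply le_INR; lia].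
Qed.

Lemma falling_INR_le_S (k j : nat) : falling (INR k) j <= falling (INR (S k)) j.
Proof.
  revert j; induction k as [|k IH]; intros [|j]; try (simpl; lra).
  - change (INR 0) with 0; rewrite falling_0_S; apply falling_INR_ge0.
  - rewrite !falling_INR_S.
    apply Rmult_le_compat; [apply pos_INR | apply falling_INR_ge0 | |apply IH].
    apply le_INR; lia.
Qed.

Lemma falling_gt0 (a : R) (j : nat) : INR j < a + 1 -> 0 < falling a j.
Proof.
  induction j as [|j IH]; intros H; simpl; [lra|].
  rewrite S_INR in H; apply Rmult_lt_0_compat; [apply IH|]; lra.
Qed.

Lemma falling_le_l (a b : R) (j : nat) :
  a <= b -> INR j < a + 1 -> falling a j <= falling b j.
Proof.
  induction j as [|j IH]; intros Hab H; simpl; [lra|].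
  rewrite S_INR in H.
  assert (0 < falling a j) by (apply falling_gt0; lra).
  apply Rmult_le_compat; try lra; apply IH; lra.
Qed.

Lemma C_ge0 (n k : nat) : 0 <= C n k.
Proof.
  unfold C; apply Rlt_le, Rdiv_lt_0_compat; [apply INR_fact_lt_0|].
  apply Rmult_lt_0_compat; apply INR_fact_lt_0.
Qed.

Lemma C_S_mul_S (n i : nat) : (i <= n)%nat ->
  C (S n) (S i) * INR (S i) = INR (S n) * C n i.
Proof.
  intros Hi; unfold C.
  replace (S n - S i)%nat with (n - i)%nat by lia.
  change (fact (S n)) with (S n * fact n)%nat.
  change (fact (S i)) with (S i * fact i)%nat.
  rewrite !mult_INR.
  assert (0 < INR (fact i)) by apply INR_fact_lt_0.
  assert (0 < INR (fact (n - i))) by apply INR_fact_lt_0.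
  assert (0 < INR (S i)) by apply lt_0_INR, Nat.lt_0_succ.
  field; lra.
Qed.

Lemma binom_pmf_ge0 (n : nat) (p : R) (k : nat) :
  0 <= p <= 1 -> 0 <= binom_pmf n p k.
Proof.
  intros Hp; unfold binom_pmf.
  apply Rmult_le_pos; [apply Rmult_le_pos; [apply C_ge0|]|]; apply pow_le; lra.
Qed.

Lemma binom_expect_le (n : nat) (p : R) (f g : R -> R) : 0 <= p <= 1 ->
  (forall k : nat, f (INR k) <= g (INR k)) -> binom_expect n p f <= binom_expect n p g.
Proof.
  intros Hp H; apply sum_Rle; intros k _.
  apply Rmult_le_compat_l; [apply binom_pmf_ge0; exact Hp | apply H].
Qed.

Lemma binom_expect_plus (n : nat) (p : R) (f g : R -> R) :
  binom_expect n p (fun x => f x + g x) = binom_expect n p f + binom_expect n p g.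
Proof. unfold binom_expect; rewrite <- sum_plus; apply sum_eq; intros; ring. Qed.

Lemma binom_expect_scal (n : nat) (p c : R) (f : R -> R) :
  binom_expect n p (fun x => c * f x) = c * binom_expect n p f.
Proof. unfold binom_expect; rewrite scal_sum; apply sum_eq; intros; ring. Qed.

Lemma binom_expect_sum (n : nat) (p : R) (F : nat -> R -> R) (J : nat) :
  binom_expect n p (fun x => sum_f_R0 (fun j => F j x) J) =
  sum_f_R0 (fun j => binom_expect n p (F j)) J.
Proof.
  induction J as [|J IH]; [reflexivity|].
  change (sum_f_R0 (fun j => binom_expect n p (F j)) (S J)) with
    (sum_f_R0 (fun j => binom_expect n p (F j)) J + binom_expect n p (F (S J))).
  rewrite <- IH, <- binom_expect_plus; reflexivity.
Qed.

Lemma binom_expect_const_1 (n : nat) (p : R) : binom_expect n p (fun _ => 1) = 1.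
Proof.
  unfold binom_expect, binom_pmf.
  transitivity ((p + (1 - p)) ^ n).
  - rewrite binomial; apply sum_eq; intros; ring.
  - replace (p + (1 - p)) with 1 by ring; apply pow1.
Qed.

Lemma binom_expect_falling_S (n : nat) (p : R) (j : nat) :
  binom_expect (S n) p (fun x => falling x (S j)) =
  INR (S n) * p * binom_expect n p (fun x => falling x j).
Proof.
  unfold binom_expect.
  rewrite decomp_sum by lia; simpl Nat.pred.
  change (INR 0) with 0; rewrite falling_0_S, Rmult_0_r, Rplus_0_l.
  rewrite scal_sum; apply sum_eq; intros i Hi.
  unfold binom_pmf; rewrite falling_INR_S.
  replace (S n - S i)%nat with (n - i)%nat by lia.
  transitivity (C (S n) (S i) * INR (S i) * p ^ S i * (1 - p) ^ (n - i) * falling (INR i) j);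
    [ring|].
  rewrite C_S_mul_S by exact Hi; simpl pow; ring.
Qed.



Lemma binom_expect_falling (n : nat) (p : R) (j : nat) :
  binom_expect n p (fun x => falling x j) = falling (INR n) j * p ^ j.
Proof.
  revert n; induction j as [|j IH]; intros n.
  - simpl; rewrite binom_expect_const_1; ring.
  - destruct n as [|n].
    + unfold binom_expect; cbn [sum_f_R0 INR]; rewrite falling_0_S; ring.
    + rewrite binom_expect_falling_S, IH, falling_INR_S.
      change (p ^ S j) with (p * p ^ j); ring.
Qed.

(* With [u = falling x]: the series [2/(a-x) = sum_j 2 (x)_j/(a)_(j+1)] truncated at [J];
   the last term, with coefficient [2/(a)_(J+1)] instead of [2/(a)_(J+2)], dominates the
   remainder on the naturals. *)
Definition trunc_series (a : R) (J : nat) (u : nat -> R) : R :=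
  sum_f_R0 (fun j => 2 / falling a (S j) * u j) J + 2 / falling a (S J) * u (S J).

Definition capped_recip (a x : R) : R := if Rle_dec x (a - 2) then 2 / (a - x) else 1.

Lemma falling_S_gt0 (a : R) (j : nat) : INR j < a -> 0 < falling a (S j).
Proof. intros H; apply falling_gt0; rewrite S_INR; lra. Qed.

Lemma trunc_series_le (a : R) (J : nat) (u v : nat -> R) : INR J < a ->
  (forall j, u j <= v j) -> trunc_series a J u <= trunc_series a J v.
Proof.
  intros HJ Huv.
  assert (Hc : forall j, (j <= J)%nat -> 0 <= 2 / falling a (S j)).
  { intros j Hj; apply le_INR in Hj.
    apply Rlt_le, Rdiv_lt_0_compat, falling_S_gt0; lra. }
  apply Rplus_le_compat.
  - apply sum_Rle; intros j Hj; apply Rmult_le_compat_l; auto.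
  - apply Rmult_le_compat_l; auto.
Qed.

Lemma sum_falling_div_telescope (a x : R) (J : nat) : INR J < a -> x <> a ->
  sum_f_R0 (fun j => falling x j / falling a (S j)) J =
  (1 - falling x (S J) / falling a (S J)) / (a - x).
Proof.
  intros HJ Hx; induction J as [|J IH].
  - simpl in *; field; lra.
  - rewrite S_INR in HJ; rewrite tech5, IH by lra.
    assert (0 < falling a (S J)) by (apply falling_S_gt0; lra).
    change (falling x (S (S J))) with (falling x (S J) * (x - INR (S J))).
    change (falling a (S (S J))) with (falling a (S J) * (a - INR (S J))).
    rewrite S_INR; field; repeat split; lra.
Qed.

Lemma recip_le_trunc_series (a : R) (J k : nat) : INR J < a -> 1 <= a - INR k ->
  2 / (a - INR k) <= trunc_series a J (falling (INR k)).
Proof.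
  intros HJ Hk.
  set (Fa := falling a (S J)); set (Fk := falling (INR k) (S J)).
  assert (HFa : 0 < Fa) by (apply falling_S_gt0; exact HJ).
  assert (HFk : 0 <= Fk) by apply falling_INR_ge0.
  assert (E : 2 / (a - INR k) =
    sum_f_R0 (fun j => 2 / falling a (S j) * falling (INR k) j) J + 2 / Fa * (Fk / (a - INR k))).
  { transitivity (2 * sum_f_R0 (fun j => falling (INR k) j / falling a (S j)) J
                  + 2 / Fa * (Fk / (a - INR k))).
    - rewrite sum_falling_div_telescope by lra; fold Fa Fk; field; lra.
    - rewrite scal_sum; f_equal; apply sum_eq; intros; unfold Rdiv; ring. }
  rewrite E; unfold trunc_series; fold Fa Fk.
  apply Rplus_le_compat_l, Rmult_le_compat_l.
  - apply Rlt_le, Rdiv_lt_0_compat; lra.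
  - unfold Rdiv; rewrite <- (Rmult_1_r Fk) at 2; apply Rmult_le_compat_l; [exact HFk|].
    rewrite <- Rinv_1; apply Rinv_le_contravar; lra.
Qed.

Lemma trunc_series_falling_le_S (a : R) (J k : nat) : INR J < a ->
  trunc_series a J (falling (INR k)) <= trunc_series a J (falling (INR (S k))).
Proof. intros HJ; apply trunc_series_le; [exact HJ | intros; apply falling_INR_le_S]. Qed.

Lemma capped_recip_le_trunc_series (a : R) (J k : nat) : INR J < a -> 2 <= a ->
  capped_recip a (INR k) <= trunc_series a J (falling (INR k)).
Proof.
  intros HJ Ha; unfold capped_recip.
  destruct (Rle_dec (INR k) (a - 2)) as [Hk|Hk]; [apply recip_le_trunc_series; lra|].
  induction k as [|k IH]; [simpl in Hk; lra|].
  rewrite S_INR in Hk.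
  destruct (Rle_lt_dec 1 (a - INR (S k))) as [H1|H1].
  - eapply Rle_trans; [|apply recip_le_trunc_series; auto].
    rewrite S_INR in *; apply Rmult_le_reg_r with (a - (INR k + 1)); [lra|].
    unfold Rdiv; rewrite Rmult_assoc, Rinv_l; lra.
  - eapply Rle_trans; [|apply trunc_series_falling_le_S; exact HJ].
    rewrite S_INR in H1; apply IH; lra.
Qed.

Lemma binom_expect_trunc_series (n : nat) (p a : R) (J : nat) :
  binom_expect n p (fun x => trunc_series a J (falling x)) =
  trunc_series a J (fun j => falling (INR n) j * p ^ j).
Proof.
  unfold trunc_series.
  rewrite binom_expect_plus, binom_expect_sum, binom_expect_scal, binom_expect_falling.
  f_equal; apply sum_eq; intros j _; rewrite binom_expect_scal, binom_expect_falling; reflexivity.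
Qed.

Lemma binom_expect_trunc_series_le (n : nat) (D a : R) (J : nat) :
  INR J < a -> (1 <= n)%nat -> 0 <= D <= INR n ->
  binom_expect n (D / INR n) (fun x => trunc_series a J (falling x)) <= trunc_series a J (pow D).
Proof.
  intros HJ Hn HD.
  assert (Hn1 : 1 <= INR n) by (apply (le_INR 1); exact Hn).
  rewrite binom_expect_trunc_series; apply trunc_series_le; [exact HJ|]; intros j.
  replace (D ^ j) with (INR n ^ j * (D / INR n) ^ j)
    by (rewrite <- Rpow_mult_distr; f_equal; field; lra).
  apply Rmult_le_compat_r; [apply pow_le, Rle_mult_inv_pos; lra | apply falling_INR_le_pow].
Qed.

Lemma trunc_series_pow_antitone (a b D : R) (J : nat) : a <= b -> INR J < a -> 0 <= D ->
  trunc_series b J (pow D) <= trunc_series a J (pow D).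
Proof.
  intros Hab HJ HD.
  assert (Hc : forall j, (j <= J)%nat -> 2 / falling b (S j) <= 2 / falling a (S j)).
  { intros j Hj; apply le_INR in Hj.
    assert (0 < falling a (S j)) by (apply falling_S_gt0; lra).
    assert (falling a (S j) <= falling b (S j)) by (apply falling_le_l; rewrite ?S_INR; lra).
    unfold Rdiv; apply Rmult_le_compat_l; [lra|]; apply Rinv_le_contravar; lra. }
  apply Rplus_le_compat.
  - apply sum_Rle; intros j Hj; apply Rmult_le_compat_r; [apply pow_le; lra | auto].
  - apply Rmult_le_compat_r; [apply pow_le; lra | auto].
Qed.

(* Positivity certificates: in terms of the nonnegative [u], [v] below, a positive
   multiple of the polynomial is a positive constant plus a positive combination of
   products [u^i v^(k-i)]. *)
Lemma quartic_pos (x : R) : 1 <= x <= 5/2 -> 0 < 6 - 25*x + 22*x^2 + x^3 - 2*x^4.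
Proof.
  intros Hx; set (u := 2*x - 2); set (v := 5 - 2*x).
  assert (Hcert : 2592 * (6 - 25*x + 22*x^2 + x^3 - 2*x^4) =
    5184 + (672 * u * v^3 + 2952 * u^2 * v^2 + 3132 * u^3 * v + 528 * u^4))
    by (unfold u, v; ring).
  assert (0 <= 672 * u * v^3 + 2952 * u^2 * v^2 + 3132 * u^3 * v + 528 * u^4).
  { assert (0 <= u) by (unfold u; lra); assert (0 <= v) by (unfold v; lra).
    repeat apply Rplus_le_le_0_compat; repeat apply Rmult_le_pos; try apply pow_le; lra. }
  lra.
Qed.

Lemma trunc_series_pow_lt_small (D : R) : 1 < D <= 5/2 ->
  trunc_series (3*D + 1) 3 (pow D) < 1 / D.
Proof.
  intros HD.
  assert (0 < falling (3*D + 1) 4) by (apply falling_gt0; simpl; lra).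
  assert (E : 1/D - trunc_series (3*D + 1) 3 (pow D) =
    (6 - 25*D + 22*D^2 + D^3 - 2*D^4) / falling (3*D + 1) 4).
  { unfold trunc_series; simpl in *; field; repeat split; lra. }
  assert (0 < (6 - 25*D + 22*D^2 + D^3 - 2*D^4) / falling (3*D + 1) 4)
    by (apply Rdiv_lt_0_compat; [apply quartic_pos|]; lra).
  lra.
Qed.

Lemma septic_pos (x : R) : 5/2 <= x <= 12 ->
  0 < -360 + 2346*x - 5493*x^2 + 5904*x^3 - 2950*x^4 + 550*x^5 + x^6 - 2*x^7.
Proof.
  intros Hx; set (u := 2*x - 5); set (v := 24 - 2*x).
  assert (Hcert : 6006818086080 *
      (-360 + 2346*x - 5493*x^2 + 5904*x^3 - 2950*x^4 + 550*x^5 + x^6 - 2*x^7) =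
    5548798207016400 + (370006665 * u * v^6 + 8638948500 * u^2 * v^5
      + 85794719640 * u^3 * v^4 + 424288875360 * u^4 * v^3 + 996231882240 * u^5 * v^2
      + 853847519280 * u^6 * v + 110522202000 * u^7))
    by (unfold u, v; ring).
  assert (0 <= 370006665 * u * v^6 + 8638948500 * u^2 * v^5
      + 85794719640 * u^3 * v^4 + 424288875360 * u^4 * v^3 + 996231882240 * u^5 * v^2
      + 853847519280 * u^6 * v + 110522202000 * u^7).
  { assert (0 <= u) by (unfold u; lra); assert (0 <= v) by (unfold v; lra).
    repeat apply Rplus_le_le_0_compat; repeat apply Rmult_le_pos; try apply pow_le; lra. }
  lra.
Qed.

Lemma trunc_series_pow_lt_medium (D : R) : 5/2 <= D <= 12 ->
  trunc_series (3*D + 1) 6 (pow D) < 1 / D.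
Proof.
  intros HD.
  assert (0 < falling (3*D + 1) 7) by (apply falling_gt0; simpl; lra).
  assert (E : 1/D - trunc_series (3*D + 1) 6 (pow D) =
    (-360 + 2346*D - 5493*D^2 + 5904*D^3 - 2950*D^4 + 550*D^5 + D^6 - 2*D^7)
    / falling (3*D + 1) 7).
  { unfold trunc_series; simpl in *; field; repeat split; lra. }
  assert (0 < (-360 + 2346*D - 5493*D^2 + 5904*D^3 - 2950*D^4 + 550*D^5 + D^6 - 2*D^7)
              / falling (3*D + 1) 7)
    by (apply Rdiv_lt_0_compat; [apply septic_pos|]; lra).
  lra.
Qed.

Section PowTerms.

Variables a D : R.

Definition pow_term (j : nat) : R := 2 / falling a (S j) * D ^ j.

Lemma trunc_series_pow_terms (J : nat) :
  trunc_series a J (pow D) = sum_f_R0 pow_term J + D * pow_term J.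
Proof. unfold trunc_series, pow_term; simpl pow; ring. Qed.

Lemma pow_term_0 : 0 < a -> pow_term 0 = 2 / a.
Proof. intros; unfold pow_term; simpl; field; lra. Qed.

Lemma pow_term_S (j : nat) : INR (S j) < a ->
  (a - INR (S j)) * pow_term (S j) = D * pow_term j.
Proof.
  intros H; unfold pow_term.
  assert (0 < falling a (S j)) by (apply falling_S_gt0; rewrite S_INR in H; lra).
  change (falling a (S (S j))) with (falling a (S j) * (a - INR (S j))).
  simpl pow; field; lra.
Qed.

Lemma pow_term_ge0 (j : nat) : 0 <= D -> INR j < a -> 0 <= pow_term j.
Proof.
  intros HD H; unfold pow_term.
  apply Rmult_le_pos; [apply Rlt_le, Rdiv_lt_0_compat, falling_S_gt0 | apply pow_le]; lra.
Qed.

Lemma sum_pow_terms (J : nat) : INR J < a ->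
  (a - D) * sum_f_R0 pow_term J =
  2 + sum_f_R0 (fun j => INR j * pow_term j) J - D * pow_term J.
Proof.
  induction J as [|J IH]; intros H.
  - simpl in *; rewrite pow_term_0 by lra; field; lra.
  - rewrite !tech5; assert (Hrec := pow_term_S J H).
    rewrite S_INR in *; specialize (IH ltac:(lra)); lra.
Qed.

Lemma sum_weighted_pow_terms (J : nat) : INR J < a ->
  sum_f_R0 (fun j => INR j * (a - INR j) * pow_term j) J =
  D * (sum_f_R0 (fun j => INR j * pow_term j) J + sum_f_R0 pow_term J)
  - D * (INR J + 1) * pow_term J.
Proof.
  induction J as [|J IH]; intros H.
  - simpl; ring.
  - rewrite !tech5; assert (Hrec := pow_term_S J H).
    rewrite S_INR in *; specialize (IH ltac:(lra)).
    rewrite IH; transitivity (D * (sum_f_R0 (fun j => INR j * pow_term j) J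
        + sum_f_R0 pow_term J) + (INR J + 1) * ((a - (INR J + 1)) * pow_term (S J))
        - D * (INR J + 1) * pow_term J); [ring|].
    rewrite Hrec; ring.
Qed.

Lemma sum_weighted_pow_terms_le (J : nat) : 0 <= D -> INR J < a ->
  (a - INR J - D) * sum_f_R0 (fun j => INR j * pow_term j) J <= D * sum_f_R0 pow_term J.
Proof.
  intros HD H.
  assert (HU : (a - INR J) * sum_f_R0 (fun j => INR j * pow_term j) J <=
               sum_f_R0 (fun j => INR j * (a - INR j) * pow_term j) J).
  { rewrite scal_sum; apply sum_Rle; intros j Hj; apply le_INR in Hj.
    assert (0 <= pow_term j) by (apply pow_term_ge0; lra).
    assert (0 <= INR j) by apply pos_INR.
    assert (0 <= INR j * pow_term j * (INR J - INR j))
      by (apply Rmult_le_pos; [apply Rmult_le_pos|]; lra).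
    replace (INR j * (a - INR j) * pow_term j)
      with (INR j * pow_term j * (a - INR J) + INR j * pow_term j * (INR J - INR j)) by ring.
    lra. }
  rewrite sum_weighted_pow_terms in HU by exact H.
  assert (0 <= D * (INR J + 1) * pow_term J).
  { assert (0 <= pow_term J) by (apply pow_term_ge0; lra).
    assert (0 <= INR J) by apply pos_INR.
    apply Rmult_le_pos; [apply Rmult_le_pos|]; lra. }
  lra.
Qed.

Lemma pow_term_le_geometric (J : nat) : 0 < D -> 3*D + 1 <= a -> INR J <= D ->
  forall j, (j <= J)%nat -> pow_term j <= 2 / a * (1/2) ^ j.
Proof.
  intros HD Ha HJ; induction j as [|j IH]; intros Hj.
  - rewrite pow_term_0 by lra; simpl; lra.
  - assert (Hj' : INR (S j) <= INR J) by (apply le_INR; exact Hj).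
    assert (Hrec := pow_term_S j ltac:(lra)).
    specialize (IH ltac:(lia)).
    assert (0 <= pow_term (S j)) by (apply pow_term_ge0; lra).
    assert (2 * pow_term (S j) <= pow_term j).
    { apply Rmult_le_reg_l with D; [exact HD|]; nra. }
    change ((1/2) ^ S j) with (1/2 * (1/2) ^ j); lra.
Qed.

End PowTerms.

Lemma nat_floor (x : R) : 0 <= x -> exists J : nat, INR J <= x < INR J + 1.
Proof.
  intros Hx; destruct (archimed x) as [H1 H2].
  assert (Hz : (0 < up x)%Z) by (apply lt_0_IZR; lra).
  exists (Z.to_nat (up x - 1)).
  rewrite INR_IZR_INZ, Z2Nat.id, minus_IZR by lia; simpl; lra.
Qed.

Lemma cubic_mul_half_pow_le (J : nat) : (12 <= J)%nat ->
  2 * (INR J + 1)^2 * (2 * INR J + 3) * (1/2)^J <= 3.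
Proof.
  induction 1 as [|J HJ IH]; [simpl; lra|].
  assert (Hy : 12 <= INR J) by (apply (le_INR 12) in HJ; simpl in HJ; lra).
  assert (Hp : 0 <= (1/2)^J) by (apply pow_le; lra).
  rewrite S_INR; change ((1/2) ^ S J) with (1/2 * (1/2) ^ J).
  assert (0 <= (2 * INR J^3 + INR J^2 - 12 * INR J - 14) * (1/2)^J)
    by (apply Rmult_le_pos; nra).
  nra.
Qed.

Lemma large_case_bound (a D S W T : R) :
  0 < D -> 0 <= S -> 2*D + 1 <= a - D ->
  (a - D) * S = 2 + W - T -> (D + 1) * W <= D * S -> T * (D^2 * (2*D + 1)) < 1 ->
  S + T < 1 / D.
Proof.
  intros HD HS Ha Hsum Hweight HT.
  set (Q := 2*D^2 + 2*D + 1).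
  assert (HSQ : Q * S <= (D + 1) * (2 - T)).
  { assert ((2*D + 1) * S <= (a - D) * S) by (apply Rmult_le_compat_r; lra).
    unfold Q; nra. }
  assert (HQ : 0 < D * Q) by (unfold Q; apply Rmult_lt_0_compat; nra).
  apply Rmult_lt_reg_l with (D * Q); [exact HQ|].
  replace (D * Q * (1 / D)) with Q by (field; lra).
  unfold Q in *; nra.
Qed.

Lemma trunc_series_pow_lt_large (a D : R) (J : nat) :
  12 <= D -> 3*D + 1 <= a -> INR J <= D < INR J + 1 ->
  trunc_series a J (pow D) < 1 / D.
Proof.
  intros HD Ha HJ.
  assert (HJa : INR J < a) by lra.
  assert (HJ12 : (11 < J)%nat) by (apply INR_lt; simpl; lra).
  set (S := sum_f_R0 (pow_term a D) J).
  set (W := sum_f_R0 (fun j => INR j * pow_term a D j) J).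
  assert (HS : 0 <= S).
  { apply (Rle_trans _ (sum_f_R0 (fun _ => 0) J)); [right; symmetry; apply sum_eq_R0; auto|].
    apply sum_Rle; intros j Hj; apply le_INR in Hj; apply pow_term_ge0; lra. }
  assert (HW : 0 <= W).
  { apply (Rle_trans _ (sum_f_R0 (fun _ => 0) J)); [right; symmetry; apply sum_eq_R0; auto|].
    apply sum_Rle; intros j Hj; apply le_INR in Hj.
    apply Rmult_le_pos; [apply pos_INR | apply pow_term_ge0; lra]. }
  assert (Hweight : (D + 1) * W <= D * S).
  { apply Rle_trans with ((a - INR J - D) * W); [apply Rmult_le_compat_r; lra|].
    apply sum_weighted_pow_terms_le; lra. }
  assert (HT : D * pow_term a D J * (D^2 * (2*D + 1)) < 1).
  { assert (Hgeo := pow_term_le_geometric a D J ltac:(lra) Ha (proj1 HJ) J (le_n J)).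
    assert (Hdec := cubic_mul_half_pow_le J HJ12).
    assert (Hp : 0 < (1/2)^J) by (apply pow_lt; lra).
    assert (Ht : 0 <= pow_term a D J) by (apply pow_term_ge0; lra).
    assert (HDa : D * pow_term a D J <= 2/3 * (1/2)^J).
    { apply Rle_trans with (D * (2 / a * (1/2)^J)); [apply Rmult_le_compat_l; lra|].
      apply Rmult_le_reg_r with a; [lra|].
      replace (D * (2 / a * (1/2)^J) * a) with (2 * D * (1/2)^J) by (field; lra).
      nra. }
    assert (Hcub : D^2 * (2*D + 1) < (INR J + 1)^2 * (2 * INR J + 3)).
    { assert (Hd : 0 <= D) by lra.
      apply Rle_lt_trans with ((INR J + 1)^2 * (2*D + 1)); [|apply Rmult_lt_compat_l; nra].
      apply Rmult_le_compat_r; [lra|]; apply pow_incr; lra. }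
    assert (0 < D^2 * (2*D + 1)) by nra.
    nra. }
  rewrite trunc_series_pow_terms.
  apply (large_case_bound a D S W); try lra.
  apply sum_pow_terms; exact HJa.
Qed.

Lemma trunc_series_pow_lt (a D : R) : 1 < D -> 3*D + 1 <= a ->
  exists J : nat, INR J < a /\ trunc_series a J (pow D) < 1 / D.
Proof.
  intros HD Ha.
  destruct (Rle_lt_dec D (5/2)) as [Hsmall|Hsmall]; [|destruct (Rle_lt_dec D 12) as [Hmed|Hlarge]].
  - exists 3%nat; change (INR 3) with (INR 2 + 1); simpl; split; [lra|].
    eapply Rle_lt_trans; [apply (trunc_series_pow_antitone (3*D + 1)); simpl; lra|].
    apply trunc_series_pow_lt_small; lra.
  - exists 6%nat; change (INR 6) with (INR 5 + 1); simpl; split; [lra|].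
    eapply Rle_lt_trans; [apply (trunc_series_pow_antitone (3*D + 1)); simpl; lra|].
    apply trunc_series_pow_lt_medium; lra.
  - destruct (nat_floor D) as [J HJ]; [lra|].
    exists J; split; [lra|].
    apply trunc_series_pow_lt_large; lra.
Qed.

Lemma f_q_capped_recip (beta q x : R) : beta < 1 ->
  f_q beta q x = capped_recip ((q - 1) / (1 - beta)) x.
Proof.
  intros Hb; unfold f_q, capped_recip; set (a := (q - 1) / (1 - beta)).
  destruct (Rle_dec x (a - 2)) as [H|H]; [|reflexivity].
  assert (Hq : q - 1 = (1 - beta) * a) by (unfold a; field; lra).
  rewrite Hq, <- Rmult_minus_distr_l; field; split; lra.
Qed.

Theorem mainTheorem14 (beta Delta : R) (q : nat) :
  0 <= beta < 1 -> 1 < Delta -> INR q >= 3 * (1 - beta) * Delta + 2 ->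
  exists N : nat, forall n : nat, (N <= n)%nat ->
    binom_expect n (Delta / INR n) (f_q beta (INR q)) < 1 / Delta.
Proof.
  intros Hb HD Hq.
  set (a := (INR q - 1) / (1 - beta)).
  assert (Ha : 3 * Delta + 1 <= a).
  { unfold a; apply Rmult_le_reg_r with (1 - beta); [lra|].
    replace ((INR q - 1) / (1 - beta) * (1 - beta)) with (INR q - 1) by (field; lra).
    lra. }
  destruct (trunc_series_pow_lt a Delta HD Ha) as [J [HJ HV]].
  destruct (nat_floor Delta) as [N HN]; [lra|].
  exists (S N); intros n Hn.
  assert (HnD : Delta <= INR n) by (apply le_INR in Hn; rewrite S_INR in Hn; lra).
  assert (Hp : 0 <= Delta / INR n <= 1).
  { split; [apply Rle_mult_inv_pos; lra|].
    apply Rmult_le_reg_r with (INR n); [lra|].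
    replace (Delta / INR n * INR n) with Delta by (field; lra); lra. }
  apply Rle_lt_trans with (2 := HV).
  apply Rle_trans with (binom_expect n (Delta / INR n) (fun x => trunc_series a J (falling x))).
  - apply binom_expect_le; [exact Hp|]; intros k.
    rewrite f_q_capped_recip by lra.
    apply capped_recip_le_trunc_series; lra.
  - apply binom_expect_trunc_series_le; [exact HJ | lia | lra].
Qed.
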